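(* Let $M=\mathbb{CP}^2\#k\overline{\mathbb{CP}^2}$. There is no reduced class $A=aH-\sum_{i=1}^k b_iE_i\in H_2(M;\mathbb Z)$ with $A\cdot A=-4$ and $\min_i b_i\ge1$ in any of the following cases: (1) $k\ge11$ and $K_{st}\cdot A\le2$; (2) $k=10$ and $K_{st}\cdot A<2$; (3) $k=10$, $K_{st}\cdot A=2$ and $\min_i b_i\ge3$.
   Context: $\{H,E_1,\dots,E_k\}$ is the standard basis of $H_2(M;\mathbb Z)$ ($H^2=1$, $E_i^2=-1$, pairwise orthogonal), and $K_{st}=-3H+\sum_{i=1}^kE_i$ is the standard canonical class. A class $aH-\sum b_iE_i$ is reduced if $b_1\ge\cdots\ge b_k\ge0$ and $a\ge b_1+b_2+b_3$. *)

(* A class A = aH - sum_{i=1}^k b_i E_i in H_2(M;Z),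
   M = CP^2 # k CP^2-bar, is encoded by (a, b) with a : int and
   b : seq int of size k, where b`_(i-1) = b_i (0-indexed). *)
From HB Require Import structures.
From mathcomp Require Import all_boot all_order all_algebra.
Set Implicit Arguments. Unset Strict Implicit. Unset Printing Implicit Defensive.
Import Order.TTheory GRing.Theory Num.Theory.
Local Open Scope ring_scope.

(* intersection form: H^2 = 1, E_i^2 = -1, pairwise orthogonal *)
Definition self_int (a : int) (b : seq int) : int :=
  a ^+ 2 - \sum_(x <- b) x ^+ 2.

(* K_st . A with K_st = -3H + sum E_i *)
Definition Kst_dot (a : int) (b : seq int) : int :=
  - (3 * a) + \sum_(x <- b) x.

(* reduced: b_1 >= ... >= b_k >= 0 and a >= b_1 + b_2 + b_3
   (missing coefficients, if k < 3, are read as 0 via the default of nth) *)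
Definition reduced (a : int) (b : seq int) : Prop :=
  (forall i j : nat, (i <= j)%N -> (j < size b)%N -> b`_j <= b`_i) /\
  (forall x, x \in b -> 0 <= x) /\
  b`_0 + b`_1 + b`_2 <= a.

Definition min_ge (b : seq int) (m : int) : Prop := forall x, x \in b -> m <= x.

(* The entries of b beyond the first three lie in [m, b_3], so by
   (w - m)(b_3 - w) >= 0 their squares are bounded by a linear function of
   their sum; that sum is in turn pinned down by K_st . A.  Together with
   reducedness this gives m b_3 (k - 9) - A.A <= (b_3 + m) K_st . A, which
   for A.A = -4 is violated in each of the three cases. *)
From HB Require Import structures.
From mathcomp Require Import all_boot all_order all_algebra.
From mathcomp Require Import zify ring lra.
Import Order.TTheory GRing.Theory Num.Theory.
Local Open Scope ring_scope.

Section OrderedRing.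
Set Implicit Arguments. Unset Strict Implicit.
Variable R : realDomainType.

Lemma sum_sqr_le_interval (m M : R) (r : seq R) :
  {in r, forall w, m <= w <= M} ->
  \sum_(w <- r) w ^+ 2 <= (M + m) * \sum_(w <- r) w - m * M *+ size r.
Proof.
elim: r => [|w r IH] r_bnd; first by rewrite !big_nil mulr0 subr0.
have /andP[mw wM] := r_bnd w (mem_head w r).
have := IH (fun v vr => r_bnd v (mem_behead (s := w :: r) vr)).
have : 0 <= (w - m) * (M - w) by rewrite mulr_ge0 // subr_ge0.
rewrite !big_cons /= mulrS; nra.
Qed.

Lemma sqr_sub_sum3_sqr_ge (m x y z a : R) :
  m <= z -> z <= y -> y <= x -> x + y + z <= a ->
  (z + m) * (3 * a - (x + y + z)) - 6 * m * z <= a ^+ 2 - (x ^+ 2 + y ^+ 2 + z ^+ 2).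
Proof.
move=> mz zy yx sa; rewrite -subr_ge0.
have -> : a ^+ 2 - (x ^+ 2 + y ^+ 2 + z ^+ 2)
            - ((z + m) * (3 * a - (x + y + z)) - 6 * m * z)
          = (a - (x + y + z)) * (a + (x + y + z) - 3 * (z + m))
            + 2 * ((x - z) * (y - m) + (y - z) * (z - m)) by ring.
apply: addr_ge0; first by apply: mulr_ge0; lra.
by rewrite pmulr_rge0 //; apply: addr_ge0; apply: mulr_ge0;
  rewrite subr_ge0 // ?(le_trans zy yx) ?(le_trans mz zy).
Qed.

End OrderedRing.

Lemma reduced_class_bound (a : int) (b : seq int) (m : int) :
  (3 <= size b)%N -> reduced a b -> min_ge b m ->
  m * b`_2 * ((size b)%:Z - 9) - self_int a b <= (b`_2 + m) * Kst_dot a b.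
Proof.
case: b => [|x [|y [|z r]]] // _ [sorted_b [_ sum3_le]] m_le.
rewrite /self_int /Kst_dot !big_cons /=.
have yx : y <= x by apply: (sorted_b 0%N 1%N).
have zy : z <= y by apply: (sorted_b 1%N 2%N).
have r_bnd : {in r, forall w, m <= w <= z}.
  move=> w wr; rewrite m_le ?inE ?wr ?orbT //=.
  have := sorted_b 2%N (index w r).+3 isT; rewrite /= nth_index //.
  by apply; rewrite !ltnS index_mem.
have mz : m <= z by rewrite m_le // !inE eqxx !orbT.
have := sum_sqr_le_interval r_bnd.
have := sqr_sub_sum3_sqr_ge mz zy yx sum3_le.
rewrite -[_ *+ size r]mulr_natr (natz (size r)) -[(size r).+3]addn3 PoszD.
move: (\sum_(w <- r) w ^+ 2) (\sum_(w <- r) w) => Q P; nia.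
Qed.

Theorem proposition5p5 (k : nat) (a : int) (b : seq int) :
  size b = k ->
  reduced a b ->
  self_int a b = -4 ->
  min_ge b 1 ->
  ~ [\/ (11 <= k)%N /\ Kst_dot a b <= 2,
        k = 10%N /\ Kst_dot a b < 2
      | [/\ k = 10%N, Kst_dot a b = 2 & min_ge b 3]].
Proof.
move=> <- red_ab A2 b_ge1 cases.
have k_ge10 : (10 <= size b)%N by case: cases => [[]|[]|[]] => [|-> _|-> _ _]; lia.
have z_ge m : min_ge b m -> m <= b`_2.
  by move=> b_ge; apply: b_ge; rewrite mem_nth // (leq_trans _ k_ge10).
have bound m c : 0 <= m -> min_ge b m -> Kst_dot a b <= c ->
    m * b`_2 * ((size b)%:Z - 9) + 4 <= (b`_2 + m) * c.
  move=> m_ge0 b_ge K_le; have z_m_ge0 : 0 <= b`_2 + m by have := z_ge m b_ge; lia.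
  apply: le_trans (ler_wpM2l z_m_ge0 K_le).
  by have := reduced_class_bound _ red_ab b_ge; rewrite A2 opprK; apply; lia.
case: cases => [[k_ge11 K_le2]|[k10 K_lt2]|[k10 K2 b_ge3]].
- have := bound 1 2 isT b_ge1 K_le2; have z_ge1 := z_ge 1 b_ge1.
  have : 0 <= b`_2 * ((size b)%:Z - 11) by rewrite mulr_ge0 ?subr_ge0 //; lia.
  nia.
- have K_le1 : Kst_dot a b <= 1 by lia.
  by have := bound 1 1 isT b_ge1 K_le1; rewrite k10; lia.
- have K_le2 : Kst_dot a b <= 2 by rewrite K2.
  by have := z_ge 3 b_ge3; have := bound 3 2 isT b_ge3 K_le2; rewrite k10; lia.
Qed.
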